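(* Let $K>0$ and define $\beta_k=(K+1-k)^{-1/2}$ for integers $0\le k\le K$. Suppose a real sequence $(\gamma_k)$ satisfies $\gamma_0\ge\beta_0$ and $\gamma_{k+1}\ge\gamma_k+\gamma_k^3$ for all integers $0\le k\le K-1$. Then $\gamma_k\ge\beta_k$ for all integers $0\le k\le K$. *)

From Stdlib Require Import Reals.
Open Scope R_scope.

Definition beta (K k : nat) : R := / sqrt (INR K + 1 - INR k).

(** The map [x |-> x + x^3] is increasing, so it suffices to check that it sends
    [beta K k = 1/sqrt m] (with [m = K + 1 - k >= 2]) above [beta K (k+1) = 1/sqrt (m - 1)].
    Comparing squares, this is [(m + 1)^2 / m^3 >= 1 / (m - 1)], i.e. [m^2 - m - 1 >= 0]. *)
From Stdlib Require Import Reals Lra Psatz.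
Open Scope R_scope.

Lemma plus_cube_le_compat (a g : R) : a <= g -> a + a ^ 3 <= g + g ^ 3.
Proof.
  intros Hag.
  assert (Hpos : 0 <= 1 + g * g + g * a + a * a) by nra.
  replace (g + g ^ 3) with (a + a ^ 3 + (g - a) * (1 + g * g + g * a + a * a)) by ring.
  nra.
Qed.

Lemma inv_sqrt_le (u x : R) : 0 < u -> 0 <= x -> / u <= x ^ 2 -> / sqrt u <= x.
Proof.
  intros Hu Hx Hle.
  rewrite <- sqrt_inv, <- (sqrt_pow2 x Hx).
  now apply sqrt_le_1_alt.
Qed.

Lemma inv_sqrt_pred_le_plus_cube (m : R) :
  2 <= m -> / sqrt (m - 1) <= / sqrt m + (/ sqrt m) ^ 3.
Proof.
  intros Hm.
  set (a := / sqrt m).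
  assert (Ha : 0 < a) by (apply Rinv_0_lt_compat, sqrt_lt_R0; lra).
  assert (Ha2 : a ^ 2 = / m) by (unfold a; rewrite pow_inv, pow2_sqrt; lra).
  apply inv_sqrt_le; [lra | nra |].
  replace ((a + a ^ 3) ^ 2) with (a ^ 2 * (1 + a ^ 2) ^ 2) by ring.
  rewrite Ha2.
  assert (Hgap : / m * (1 + / m) ^ 2 - / (m - 1) = (m * m - m - 1) / (m ^ 3 * (m - 1)))
    by (field; lra).
  assert (0 <= (m * m - m - 1) / (m ^ 3 * (m - 1))).
  { apply Rle_mult_inv_pos; [nra |].
    apply Rmult_lt_0_compat; [apply pow_lt |]; lra. }
  lra.
Qed.

Lemma beta_succ_le_plus_cube (K k : nat) :
  (k < K)%nat -> beta K (S k) <= beta K k + beta K k ^ 3.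
Proof.
  intros Hk.
  unfold beta.
  rewrite S_INR.
  replace (INR K + 1 - (INR k + 1)) with (INR K + 1 - INR k - 1) by ring.
  apply inv_sqrt_pred_le_plus_cube.
  apply le_INR in Hk.
  rewrite S_INR in Hk.
  lra.
Qed.

Theorem mainTheorem10 (K : nat) (gamma : nat -> R) :
  (0 < K)%nat ->
  gamma 0%nat >= beta K 0 ->
  (forall k : nat, (k <= K - 1)%nat -> gamma (S k) >= gamma k + gamma k ^ 3) ->
  forall k : nat, (k <= K)%nat -> gamma k >= beta K k.
Proof.
  intros _ H0 Hstep k.
  induction k as [|k IH]; intros Hk; [exact H0 |].
  assert (Hbeta : beta K (S k) <= beta K k + beta K k ^ 3)
    by (apply beta_succ_le_plus_cube; lia).
  assert (Hmono : beta K k + beta K k ^ 3 <= gamma k + gamma k ^ 3)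
    by (apply plus_cube_le_compat, Rge_le, IH; lia).
  assert (Hgamma : gamma (S k) >= gamma k + gamma k ^ 3) by (apply Hstep; lia).
  lra.
Qed.
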